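(* Let $\delta\le10^{-7}$ be the deletion probability, let $m>n$, $w=10000\log m$, and $d=10\frac{\log m}{\log(1/\delta)}$. Let $X$ be a set of $m^2$ independent traces of a string $S=p_1,\ldots,p_n$, and for each $x\in X$ let $i_x$ be uniform in $\{1,\ldots,n-3w+1\}$, $L_x=x_{i_x},\ldots,x_{i_x+w-1}$ and $R_x=x_{i_x+2w},\ldots,x_{i_x+3w-1}$. Then with probability at least $1-O(m^{-0.2})$, no $x\in X$ has more than $d$ deletions within $L_x$ or within $R_x$.
   Context: A trace is generated from $S$ by sampling independent bits $t_k$ with $\Pr[t_k=1]=p_k$, deleting each independently with probability $\delta$, and concatenating survivors. For a block of $w$ consecutive trace bits originating from original positions $a_1<\cdots<a_w$, the number of deletions within the block is $(a_w-a_1+1)-w$, the number of original positions between its first and last bits that were deleted. $\log$ denotes the natural logarithm. *)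

From mathcomp Require Import all_boot all_order all_algebra.
From mathcomp Require Import all_classical all_reals all_analysis.
Set Implicit Arguments. Unset Strict Implicit. Unset Printing Implicit Defensive.
Import Order.TTheory GRing.Theory Num.Theory.
Local Open Scope ring_scope.

(* One sampled trace (together with its random start index):
   - kept j  : original position j (0-based) survives the deletion channel,
   - bits j  : the sampled bit t_j,
   - i       : i_x - 1, where i_x is uniform in {1,...,k}. *)
Definition outcome (n k : nat) : finType :=
  ({ffun 'I_n -> bool} * {ffun 'I_n -> bool} * 'I_k)%type.

Definition kept_of n k (o : outcome n k) : {ffun 'I_n -> bool} := o.1.1.
Definition bits_of n k (o : outcome n k) : {ffun 'I_n -> bool} := o.1.2.
Definition start_of n k (o : outcome n k) : nat := val o.2.

Definition weight (R : realType) (delta : R) n k (p : 'I_n -> R)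
    (o : outcome n k) : R :=
  (\prod_(j < n) (if kept_of o j then 1 - delta else delta)) *
  (\prod_(j < n) (if bits_of o j then p j else 1 - p j)) / k%:R.

(* original (0-based) positions a_1 < a_2 < ... of the surviving bits,
   i.e. the trace bit x_j comes from original position (survivors`_(j-1)) *)
Definition survivors n (kept : {ffun 'I_n -> bool}) : seq nat :=
  [seq val j | j <- enum 'I_n & kept j].

Definition trace n (kept bits : {ffun 'I_n -> bool}) : seq bool :=
  [seq bits j | j <- enum 'I_n & kept j].

(* Number of deletions within the block of w consecutive trace bits starting
   at 0-based trace index s: (a_last - a_first + 1) - (#bits in block).
   If the trace is too short the block is truncated to its existing bits
   (an empty block has 0 deletions). *)
Definition block_deletions n (kept : {ffun 'I_n -> bool}) (s w : nat) : nat :=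
  let blk := take w (drop s (survivors kept)) in
  if blk is a :: _ then (last a blk - a + 1 - size blk)%N else 0%N.

Definition blocklen (R : realType) (m : nat) : nat :=
  Num.truncn (10000 * ln (m%:R : R)).

Definition dbound (R : realType) (delta : R) (m : nat) : R :=
  10 * ln (m%:R : R) / ln (delta^-1).

(* Good event: no x has more than d deletions within L_x or R_x.
   L_x = x_{i_x},...,x_{i_x+w-1}   (0-based start i_x - 1)
   R_x = x_{i_x+2w},...,x_{i_x+3w-1} (0-based start i_x - 1 + 2w) *)
Definition good_event (R : realType) (delta : R) (m n k : nat)
    (X : {ffun 'I_(m ^ 2) -> outcome n k}) : bool :=
  let w := blocklen R m in
  [forall x : 'I_(m ^ 2),
     ((block_deletions (kept_of (X x)) (start_of (X x)) w)%:R
        <= dbound delta m) &&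
     ((block_deletions (kept_of (X x)) (start_of (X x) + 2 * w) w)%:R
        <= dbound delta m)].

Definition prob_good (R : realType) (delta : R) (m n : nat) (p : 'I_n -> R) : R :=
  let k := (n - 3 * blocklen R m + 1)%N in
  \sum_(X : {ffun 'I_(m ^ 2) -> outcome n k} | good_event delta X)
     \prod_(x : 'I_(m ^ 2)) weight delta p (X x).

(* Union bound over the m^2 traces and the two blocks of each trace.  If a block of w
   trace bits has more than d deletions, then the window of w + D original positions,
   D = floor d + 1, starting at the origin of its first bit contains at least D deleted
   positions.  For each of the at most n <= m window starts, Markov's inequality applied
   to z^(#deleted), z = delta^(-2/5), bounds this by z^-D (1 - delta + delta z)^(w + D)
   <= m^-4 * e m^(4/5).  Altogether the failure probability is at most
   m^2 * 2m * e m^(-16/5) = 2e m^(-1/5). *)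

From mathcomp Require Import all_boot all_order all_algebra.
From mathcomp Require Import all_classical all_reals all_analysis.
From mathcomp Require Import zify ring lra.
Import Order.TTheory GRing.Theory Num.Theory.

Set Implicit Arguments. Unset Strict Implicit. Unset Printing Implicit Defensive.

Lemma count_iota0D (p : pred nat) x y :
  count p (iota 0 (x + y)) = count p (iota 0 x) + count p (iota x y).
Proof. by rewrite iotaD count_cat. Qed.

Lemma leq_count_iota0 (p : pred nat) : {homo (fun x => count p (iota 0 x)) : x y / x <= y}.
Proof. by move=> x y /subnKC <-; rewrite count_iota0D leq_addr. Qed.

Section Survivors.
Variables (n : nat) (kept : {ffun 'I_n -> bool}).

Definition keptn (i : nat) : bool := if insub i is Some j then kept j else false.

Lemma keptn_ord (j : 'I_n) : keptn j = kept j.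
Proof. by rewrite /keptn valK. Qed.

Lemma survivorsE : survivors kept = [seq i <- iota 0 n | keptn i].
Proof.
rewrite /survivors -val_enum_ord filter_map; congr map.
by apply: eq_filter => j; rewrite /= keptn_ord.
Qed.

Definition kept_before (x : nat) : nat := count keptn (iota 0 x).
Definition deleted_before (x : nat) : nat := count (predC keptn) (iota 0 x).

Lemma kept_beforeD x y : kept_before (x + y) = kept_before x + count keptn (iota x y).
Proof. exact: count_iota0D. Qed.

Lemma leq_kept_before : {homo kept_before : x y / x <= y}.
Proof. exact: leq_count_iota0. Qed.

Lemma leq_deleted_before : {homo deleted_before : x y / x <= y}.
Proof. exact: leq_count_iota0. Qed.

Lemma kept_beforeD_leq x y : kept_before (x + y) <= kept_before x + y.
Proof.
by rewrite kept_beforeD leq_add2l (leq_trans (count_size _ _)) ?size_iota.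
Qed.

Lemma kept_before_le x : kept_before x <= x.
Proof. exact: kept_beforeD_leq 0 x. Qed.

Lemma deleted_beforeE x : deleted_before x = x - kept_before x.
Proof.
by have := count_predC keptn (iota 0 x); rewrite size_iota /deleted_before /kept_before; lia.
Qed.

Lemma nth_survivors k : k < size (survivors kept) ->
  let x := nth 0 (survivors kept) k in [/\ kept_before x = k, keptn x & x < n].
Proof.
move=> lt_k x.
have : x \in survivors kept by exact: mem_nth.
rewrite survivorsE mem_filter mem_iota add0n => /andP [kx lt_xn].
split=> //; apply/eqP.
have uniq_surv : uniq (survivors kept) by rewrite survivorsE filter_uniq ?iota_uniq.
have split_n : iota 0 n = iota 0 x ++ x :: iota x.+1 (n - x.+1).
  by rewrite {1}(_ : n = x + (n - x.+1).+1) ?iotaD //; lia.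
have [lt_cx nth_cx] : kept_before x < size (survivors kept) /\
    nth 0 (survivors kept) (kept_before x) = x.
  rewrite survivorsE split_n filter_cat /= kx size_cat /= nth_cat size_filter.
  by rewrite ltnn subnn; split=> //; rewrite addnS ltnS leq_addr.
by rewrite -(nth_uniq 0 lt_cx lt_k uniq_surv) nth_cx.
Qed.

(* [a] is the original position of the first bit of the block and [b - 1] that of its last. *)
Lemma block_deletions_span s w : 0 < block_deletions kept s w ->
  exists a b, [/\ a < b <= n, kept_before b - kept_before a <= w &
    block_deletions kept s w = deleted_before b - deleted_before a].
Proof.
rewrite /block_deletions.
case eblk: (take w (drop s (survivors kept))) => [//|a blk] _.
have [l l_size] : exists l, size (a :: blk) = l by eexists.
have l_gt0 : 0 < l by rewrite -l_size.
have l_def : l = minn w (size (survivors kept) - s).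
  by rewrite -l_size -eblk size_take_min size_drop.
have le_sl : s + l <= size (survivors kept) by lia.
have nth_blk i : i < l -> nth 0 (a :: blk) i = nth 0 (survivors kept) (s + i).
  by move=> lt_il; rewrite -eblk nth_take ?nth_drop //; lia.
have [ka _ lt_an] := nth_survivors (k := s) ltac:(lia).
have [kb keptb lt_bn] := nth_survivors (k := s + l.-1) ltac:(lia).
have a_def : a = nth 0 (survivors kept) s by rewrite -[s]addn0 -nth_blk.
rewrite -a_def in ka lt_an.
set b := nth 0 (survivors kept) (s + l.-1) in kb keptb lt_bn.
have kb1 : kept_before b.+1 = s + l.
  by rewrite -addn1 kept_beforeD kb /= keptb; lia.
have lt_ab : a < b.+1.
  by rewrite ltnNge; apply/negP => /leq_kept_before; rewrite ka kb1; lia.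
have le_sa : s <= a by rewrite -ka kept_before_le.
have le_l_ab : l <= b.+1 - a.
  by have := kept_beforeD_leq a (b.+1 - a); rewrite subnKC ?ka ?kb1 ?(ltnW lt_ab); lia.
exists a, b.+1; rewrite lt_ab lt_bn kb1 ka !deleted_beforeE; split=> //; first by lia.
rewrite (_ : last a (a :: blk) = last 0 (a :: blk)) // -nth_last l_size nth_blk -/b; lia.
Qed.

Lemma deleted_window a b w D : a <= b <= n -> kept_before b - kept_before a <= w ->
  D <= deleted_before b - deleted_before a ->
  D <= deleted_before (minn (a + (w + D)) n) - deleted_before a.
Proof.
move=> /andP [le_ab le_bn] kept_ab; case: (leqP b (a + (w + D))) => [le_b | lt_b].
  by move/leq_trans; apply; rewrite leq_sub2r // leq_deleted_before // leq_min le_b.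
(* Otherwise the window lies inside [a, b), hence has at most w kept positions. *)
have -> : minn (a + (w + D)) n = a + (w + D) by apply/minn_idPl; lia.
move=> _; rewrite !deleted_beforeE.
have := kept_beforeD_leq a (w + D); have := kept_before_le a.
have := leq_kept_before (leq_addr (w + D) a); have := leq_kept_before (ltnW lt_b); lia.
Qed.

Lemma long_block_window s w D : 0 < D <= block_deletions kept s w ->
  exists2 a, a < n & D <= deleted_before (minn (a + (w + D)) n) - deleted_before a.
Proof.
case/andP=> D_gt0 le_D; have [a [b [/andP [lt_ab le_bn] kept_ab del_ab]]] :=
  block_deletions_span (leq_trans D_gt0 le_D).
exists a; first exact: leq_trans le_bn.
by apply: deleted_window kept_ab _; rewrite ?(ltnW lt_ab) // -del_ab.
Qed.
End Survivors.

Lemma sum_nat_of_bool (I : Type) (r : seq I) (P : pred I) : \sum_(i <- r) P i = count P r.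
Proof. by rewrite -sum1_count [RHS]big_mkcond; apply: eq_bigr => i _; case: (P i). Qed.

Definition deleted_in n (kept : {ffun 'I_n -> bool}) (a b : nat) : nat :=
  \sum_(i < n | a <= i < b) ~~ kept i.

Lemma deleted_inE n (kept : {ffun 'I_n -> bool}) a b : a <= b -> a <= n ->
  deleted_in kept a b = deleted_before kept (minn b n) - deleted_before kept a.
Proof.
move=> le_ab le_an; set c := minn b n.
have le_ac : a <= c by rewrite leq_min le_ab.
have le_cn : c <= n by rewrite geq_minr.
pose P i := (a <= i < b) && ~~ keptn kept i.
have -> : deleted_in kept a b = count P (iota 0 n).
  rewrite /deleted_in big_mkcond /= (eq_bigr (fun i : 'I_n => P i : nat)).
    by rewrite -(big_mkord xpredT (fun i => P i : nat)) sum_nat_of_bool /index_iota subn0.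
  by move=> i _; rewrite /P keptn_ord; case: ifP.
have -> : count P (iota 0 n) =
    count P (iota 0 a) + count P (iota a (c - a)) + count P (iota c (n - c)).
  by rewrite -count_iota0D subnKC // -count_iota0D subnKC.
have -> : deleted_before kept c - deleted_before kept a =
    count (predC (keptn kept)) (iota a (c - a)).
  by rewrite /deleted_before -[in LHS](subnKC le_ac) count_iota0D addKn.
rewrite (@eq_in_count _ P pred0 (iota 0 a)) ?count_pred0; last first.
  by move=> i; rewrite mem_iota add0n /P => /andP [_ lt_ia]; rewrite leqNgt lt_ia.
rewrite (@eq_in_count _ P (predC (keptn kept)) (iota a (c - a))); last first.
  by move=> i; rewrite mem_iota subnKC // /P leq_min => /andP [-> /andP [-> _]].
rewrite (@eq_in_count _ P pred0 (iota c _)) ?count_pred0 ?addn0 //.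
move=> i; rewrite mem_iota subnKC // /P /c => /andP [le_ci lt_in]; apply/negbTE.
have le_bi : b <= i by move: le_ci; rewrite geq_min [n <= i]leqNgt lt_in orbF.
by rewrite ltnNge le_bi andbF.
Qed.

Local Open Scope ring_scope.

Lemma card_ord_range n a b : (#|[pred i : 'I_n | a <= i < b]| <= b - a)%N.
Proof.
rewrite (_ : (b - a)%N = size (index_iota a b)); last by rewrite size_iota.
rewrite cardE -(size_map val); apply: uniq_leq_size.
  by rewrite map_inj_uniq ?enum_uniq //; exact: val_inj.
by move=> x /mapP [i]; rewrite mem_enum inE => + ->; rewrite mem_index_iota.
Qed.

Lemma sum_indicator_ge1 (R : numDomainType) (I : finType) (P : pred I) i :
  P i -> 1 <= \sum_j (P j)%:R :> R.
Proof.
move=> Pi; rewrite (bigD1 i) //= Pi lerDl.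
by apply: sumr_ge0 => j _; case: (P j).
Qed.

Lemma indicator_leq_le_expr (R : numFieldType) (z : R) (D N : nat) :
  1 <= z -> (D <= N)%N%:R <= z ^- D * z ^+ N.
Proof.
move=> z_ge1; have z_gt0 : 0 < z by apply: lt_le_trans z_ge1.
case: leqP => [le_DN | _]; last by rewrite mulr_ge0 ?invr_ge0 ?exprn_ge0 ?ltW.
by rewrite mulr1n -(mulVf (expf_neq0 D (lt0r_neq0 z_gt0))) ler_wpM2l
  ?invr_ge0 ?exprn_ge0 ?(ltW z_gt0) ?ler_weXn2l.
Qed.

Section DeletionChannel.
Variables (R : realType) (delta : R) (n : nat).
Hypotheses (delta_ge0 : 0 <= delta) (delta_le1 : delta <= 1).

Definition kept_weight (kept : {ffun 'I_n -> bool}) : R :=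
  \prod_(j < n) (if kept j then 1 - delta else delta).

Lemma kept_weight_ge0 kept : 0 <= kept_weight kept.
Proof. by apply: prodr_ge0 => j _; case: (kept j); rewrite ?subr_ge0. Qed.

Lemma sum_kept_weight : \sum_kept kept_weight kept = 1.
Proof.
rewrite /kept_weight -(bigA_distr_bigA (fun _ (b : bool) => if b then 1 - delta else delta)).
by apply: big1 => i _; rewrite big_bool /= subrK.
Qed.

Lemma deleted_in_moment a b (z : R) :
  \sum_kept kept_weight kept * z ^+ deleted_in kept a b =
  (1 - delta + delta * z) ^+ #|[pred i : 'I_n | (a <= i < b)%N]|.
Proof.
pose F (i : 'I_n) (k : bool) := (if k then 1 - delta else delta) *
  (if (a <= i < b)%N then z ^+ ~~ k else 1).
transitivity (\sum_(kept : {ffun 'I_n -> bool}) \prod_i F i (kept i)).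
  apply: eq_bigr => kept _; rewrite /deleted_in expr_sum.
  by rewrite (big_mkcond (fun i : 'I_n => (a <= i < b)%N)) -big_split.
rewrite -bigA_distr_bigA -prodr_const (big_mkcond (fun i : 'I_n => (a <= i < b)%N)).
apply: eq_bigr => i _; rewrite big_bool /F /=.
by case: ifP => _; rewrite ?expr0 ?expr1 !mulr1 ?subrK.
Qed.

Lemma deleted_in_tail a b D (z : R) : 1 <= z ->
  \sum_kept kept_weight kept * (D <= deleted_in kept a b)%N%:R <=
  z ^- D * (1 - delta + delta * z) ^+ (b - a).
Proof.
move=> z_ge1.
apply: le_trans (_ : \sum_kept kept_weight kept * (z ^- D * z ^+ deleted_in kept a b) <= _).
  by apply: ler_sum => kept _; rewrite ler_wpM2l ?kept_weight_ge0 ?indicator_leq_le_expr.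
under eq_bigr do rewrite mulrCA.
rewrite -mulr_sumr deleted_in_moment ler_wpM2l ?invr_ge0 ?exprn_ge0 ?(le_trans ler01) //.
apply: ler_weXn2l; last exact: card_ord_range.
have : 0 <= delta * (z - 1) by rewrite mulr_ge0 // subr_ge0.
lra.
Qed.
End DeletionChannel.

Section IndependentCopies.
Variables (R : realType) (T : finType) (W : T -> R).
Hypotheses (W_ge0 : forall o, 0 <= W o) (W_sum1 : \sum_o W o = 1).
Variable N : nat.

Lemma sum_prod_marginal (x : 'I_N) (F : T -> R) :
  \sum_(X : {ffun 'I_N -> T}) (\prod_y W (X y)) * F (X x) = \sum_o W o * F o.
Proof.
pose G (y : 'I_N) o := W o * (if y == x then F o else 1).
transitivity (\sum_(X : {ffun 'I_N -> T}) \prod_y G y (X y)).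
  apply: eq_bigr => X _; rewrite /G big_split /=; congr (_ * _).
  by rewrite (bigD1 x) //= eqxx big1 ?mulr1 // => y /negbTE ->.
rewrite -bigA_distr_bigA (bigD1 x) //= [X in _ * X]big1 ?mulr1.
  by apply: eq_bigr => o _; rewrite /G eqxx.
by move=> y /negbTE yx; under eq_bigr do rewrite /G yx mulr1.
Qed.

Lemma union_bound_iid (good : pred T) :
  1 - N%:R * (\sum_o W o * (~~ good o)%:R) <=
  \sum_(X : {ffun 'I_N -> T} | [forall x, good (X x)]) \prod_x W (X x).
Proof.
have total : \sum_(X : {ffun 'I_N -> T}) \prod_x W (X x) = 1.
  by rewrite -(bigA_distr_bigA (fun _ => W)) big1.
have bad_le : \sum_(X : {ffun 'I_N -> T} | ~~ [forall x, good (X x)]) \prod_x W (X x) <=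
    N%:R * \sum_o W o * (~~ good o)%:R.
  apply: (@le_trans _ _
    (\sum_(x < N) \sum_(X : {ffun 'I_N -> T}) (\prod_y W (X y)) * (~~ good (X x))%:R)).
    rewrite exchange_big /= big_mkcond /=; apply: ler_sum => X _; rewrite -mulr_sumr.
    case: forallP => [_ | /existsNP [x /negP bad_x]] /=.
      by rewrite mulr_ge0 ?prodr_ge0 ?sumr_ge0.
    by rewrite ler_peMr ?prodr_ge0 // (@sum_indicator_ge1 _ _ (fun x => ~~ good (X x)) x).
  rewrite (eq_bigr _ (fun x _ => sum_prod_marginal x (fun o => (~~ good o)%:R))).
  by rewrite sumr_const card_ord mulr_natl.
move: total bad_le; rewrite (bigID (fun X : {ffun 'I_N -> T} => [forall x, good (X x)])) /=.
lra.
Qed.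
End IndependentCopies.

Lemma sum_pair (R : nmodType) (I J : finType) (F : I * J -> R) :
  \sum_(o : I * J) F o = \sum_i \sum_j F (i, j).
Proof. by rewrite pair_bigA; apply: eq_bigr => -[]. Qed.

Section Outcomes.
Variables (R : realType) (delta : R) (n k : nat) (p : 'I_n -> R).

Lemma sum_bits_weight :
  \sum_(bits : {ffun 'I_n -> bool}) \prod_(j < n) (if bits j then p j else 1 - p j) = 1.
Proof.
rewrite -(bigA_distr_bigA (fun j (b : bool) => if b then p j else 1 - p j)).
by apply: big1 => j _; rewrite big_bool /= addrC subrK.
Qed.

Lemma sum_weight_kept_start (f : {ffun 'I_n -> bool} -> nat -> R) :
  \sum_(o : outcome n k) weight delta p o * f (kept_of o) (start_of o) =
  k%:R^-1 * \sum_(s < k) \sum_kept kept_weight delta kept * f kept s.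
Proof.
rewrite sum_pair exchange_big mulr_sumr; apply: eq_bigr => s _.
rewrite sum_pair mulr_sumr; apply: eq_bigr => kept _.
rewrite /weight /kept_of /bits_of /start_of /=.
rewrite -[RHS]mulr1 -[X in _ = _ * X]sum_bits_weight mulr_sumr; apply: eq_bigr => bits _.
by rewrite /kept_weight; ring.
Qed.

Hypotheses (delta_ge0 : 0 <= delta) (delta_le1 : delta <= 1).
Hypothesis p01 : forall j, 0 <= p j <= 1.

Lemma weight_ge0 (o : outcome n k) : 0 <= weight delta p o.
Proof.
rewrite /weight !mulr_ge0 ?invr_ge0 ?kept_weight_ge0 //.
by apply: prodr_ge0 => j _; have /andP [? ?] := p01 j; case: (bits_of o j); rewrite ?subr_ge0.
Qed.

Lemma sum_weight : (0 < k)%N -> \sum_(o : outcome n k) weight delta p o = 1.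
Proof.
move=> k_gt0; have := sum_weight_kept_start (fun _ _ => 1).
under eq_bigr do rewrite mulr1; move=> ->.
under eq_bigr do under eq_bigr do rewrite mulr1.
under eq_bigr do rewrite sum_kept_weight //.
by rewrite sumr_const card_ord -mulr_natl mulr1 mulVf ?pnatr_eq0 -?lt0n.
Qed.
End Outcomes.

Definition trace_ok (R : realType) (w : nat) (d : R) n (kept : {ffun 'I_n -> bool})
    (s : nat) : bool :=
  ((block_deletions kept s w)%:R <= d) && ((block_deletions kept (s + 2 * w) w)%:R <= d).

Definition excess_threshold (R : realType) (d : R) : nat := (Num.truncn d).+1.

Section ExcessDeletions.
Variables (R : realType) (d : R) (n : nat).
Hypothesis d_ge0 : 0 <= d.
Let D := excess_threshold d.

Lemma excess_block_window (kept : {ffun 'I_n -> bool}) t w :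
  d < (block_deletions kept t w)%:R ->
  exists a : 'I_n, (D <= deleted_in kept a (a + (w + D)))%N.
Proof.
rewrite -truncn_lt_nat // => lt_d.
have [a lt_an le_D] := long_block_window (s := t) (w := w) (D := D) (kept := kept) lt_d.
by exists (Ordinal lt_an); rewrite deleted_inE ?leq_addr ?(ltnW lt_an).
Qed.

Lemma trace_not_ok_le (kept : {ffun 'I_n -> bool}) w s :
  (~~ trace_ok w d kept s)%:R <=
  2 * \sum_(a < n) (D <= deleted_in kept a (a + (w + D)))%N%:R :> R.
Proof.
have sum_ge0 : 0 <= \sum_(a < n) (D <= deleted_in kept a (a + (w + D)))%N%:R :> R.
  by rewrite sumr_ge0.
case: (boolP (trace_ok w d kept s)) => [_ | ]; first by rewrite mulr_ge0.
rewrite negb_and -!ltNge => /orP [] /excess_block_window [a le_D];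
  move: (@sum_indicator_ge1 R _ (fun a : 'I_n => D <= deleted_in kept a (a + (w + D)))%N
    _ le_D) => /=; lra.
Qed.
End ExcessDeletions.

Lemma prob_trace_not_ok (R : realType) (delta d z : R) n k (p : 'I_n -> R) w :
  0 <= delta -> delta <= 1 -> 0 <= d -> 1 <= z -> (0 < k)%N ->
  \sum_(o : outcome n k) weight delta p o * (~~ trace_ok w d (kept_of o) (start_of o))%:R
    <= 2 * n%:R * (z ^- excess_threshold d *
                   (1 - delta + delta * z) ^+ (w + excess_threshold d)).
Proof.
move=> delta_ge0 delta_le1 d_ge0 z_ge1 k_gt0; set D := excess_threshold d; set B := _ * _ ^+ _.
rewrite (@sum_weight_kept_start _ _ _ _ _ (fun kept s => (~~ trace_ok w d kept s)%:R)).
apply: le_trans (_ : k%:R^-1 * \sum_(s < k) (2 * n%:R * B) <= _); last first.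
  by rewrite sumr_const card_ord -[_ * B *+ k]mulr_natl mulKf ?pnatr_eq0 -?lt0n.
rewrite ler_wpM2l ?invr_ge0 //; apply: ler_sum => s _.
apply: le_trans (_ : \sum_kept kept_weight delta kept *
    (2 * \sum_(a < n) (D <= deleted_in kept a (a + (w + D)))%N%:R) <= _).
  by apply: ler_sum => kept _; rewrite ler_wpM2l ?kept_weight_ge0 ?trace_not_ok_le.
under eq_bigr do rewrite mulrCA mulr_sumr.
rewrite -mulr_sumr exchange_big -mulrA ler_wpM2l //= mulr_natl.
rewrite -[in X in _ <= X](card_ord n) -sumr_const; apply: ler_sum => a _.
by have := deleted_in_tail n delta_ge0 delta_le1 a (a + (w + D)) D z_ge1; rewrite addKn.
Qed.

(* z = delta^(-2/5): z^-D <= m^-4 when D > d, while delta z = delta^(3/5) is still tiny. *)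
Definition tilt (R : realType) (delta : R) : R := expR (2 / 5 * ln delta^-1).

Section Numerics.
Variables (R : realType) (delta : R) (m : nat).
Hypotheses (delta_gt0 : 0 < delta) (delta_small : delta <= 10 ^- 7) (m_gt0 : (0 < m)%N).

Let lm := ln (m%:R : R).
Let la := ln delta^-1.
Let D := excess_threshold (dbound delta m).

Lemma delta_mul_10e7_le1 : delta * 10 ^+ 7 <= 1.
Proof. by rewrite -ler_pdivlMr ?exprn_gt0 // div1r. Qed.

Lemma delta_le_tenth : delta <= 1 / 10.
Proof.
have : (10 : R) ^+ 1 <= 10 ^+ 7 by apply: ler_weXn2l; rewrite ?ler1n.
have := delta_mul_10e7_le1; rewrite expr1; nra.
Qed.

Lemma ln_inv_delta_ge : 1 / 2 <= la.
Proof.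
have : 1 - la <= delta.
  by rewrite -[delta]invrK -(lnK (x := delta^-1)) ?posrE ?invr_gt0 // -expRN expR_ge1Dx.
have := delta_le_tenth; lra.
Qed.

Lemma ln_m_ge0 : 0 <= lm.
Proof. by rewrite ln_ge0 // ler1n. Qed.

Lemma dbound_ge0 : 0 <= dbound delta m.
Proof.
by rewrite divr_ge0 ?mulr_ge0 ?ln_m_ge0 //; have := ln_inv_delta_ge; rewrite /la; lra.
Qed.

Lemma ln_mul_dbound : la * dbound delta m = 10 * lm.
Proof. by rewrite /dbound mulrC divfK //; have := ln_inv_delta_ge; rewrite /la; lra. Qed.

Lemma excess_threshold_bounds : 10 * lm <= la * D%:R /\ D%:R <= 20 * lm + 1.
Proof.
have la_ge := ln_inv_delta_ge; have lm_ge0 := ln_m_ge0; have d_ge0 := dbound_ge0.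
have d_lt : dbound delta m < D%:R by exact: truncnS_gt.
have d_le : D%:R <= dbound delta m + 1.
  by rewrite /D /excess_threshold -addn1 natrD lerD2r truncn_le.
have := ln_mul_dbound; split; nra.
Qed.

Lemma tilt_pow_excess : tilt delta ^- D <= expR (- (4 * lm)).
Proof.
rewrite /tilt -/la -expRM_natr -expRN ler_expR lerN2.
have [le_D _] := excess_threshold_bounds; lra.
Qed.

Lemma tilt_ge1 : 1 <= tilt delta.
Proof. by rewrite -expR0 ler_expR mulr_ge0 //; have := ln_inv_delta_ge; rewrite /la; lra. Qed.

Lemma delta_tilt_le : delta * tilt delta <= 7 / 10 ^+ 5.
Proof.
have delta_eq : delta = expR (- la) by rewrite expRN lnK ?invrK // posrE invr_gt0.
have u5 : (delta * tilt delta) ^+ 5 = delta ^+ 3.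
  by rewrite /tilt -/la delta_eq -expRD -!expRM_natr; congr expR; lra.
have u_ge0 : 0 <= delta * tilt delta by rewrite mulr_ge0 ?expR_ge0 ?ltW.
move: (delta * tilt delta) u_ge0 u5 => u u_ge0 u5.
rewrite ler_pdivlMr ?exprn_gt0 // -(@ler_pXn2r _ 5) ?nnegrE ?mulr_ge0 ?exprn_ge0 //.
rewrite exprMn u5 -exprM (_ : (5 * 5 = 7 * 3 + 4)%N) // exprD exprM mulrA -exprMn.
apply: le_trans (_ : 1 * 10 ^+ 4 <= _).
  have ge0 : 0 <= delta * 10 ^+ 7 by rewrite mulr_ge0 ?exprn_ge0 ?ltW.
  by rewrite ler_wpM2r ?exprn_ge0 ?exprn_ile1 ?delta_mul_10e7_le1.
by rewrite mul1r -!natrX ler_nat.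
Qed.

Lemma tilted_moment_le w : w%:R <= 10000 * lm ->
  (1 - delta + delta * tilt delta) ^+ (w + D) <= expR (4 / 5 * lm + 1).
Proof.
move=> le_w; set u := delta * tilt delta.
have u_ge0 : 0 <= u by rewrite mulr_ge0 ?expR_ge0 ?ltW.
have u_le : u * 10 ^+ 5 <= 7 by rewrite -ler_pdivlMr ?exprn_gt0 ?delta_tilt_le.
have e5 : (10 : R) ^+ 5 = 10 * (10 * (10 * (10 * 10))) by rewrite !exprS expr0 mulr1.
have [_ le_D] := excess_threshold_bounds; have lm_ge0 := ln_m_ge0.
apply: le_trans (_ : expR u ^+ (w + D) <= _).
  apply: lerXn2r; rewrite ?nnegrE ?expR_ge0 //;
    have := expR_ge1Dx u; have := delta_le_tenth; have := delta_gt0; lra.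
rewrite -expRM_natr ler_expR.
have : u * (w + D)%:R <= u * (10020 * lm + 1) by rewrite ler_wpM2l // natrD; lra.
rewrite e5 in u_le; nra.
Qed.

Lemma failure_bound_le n w : (n <= m)%N -> w%:R <= 10000 * lm ->
  (m ^ 2)%:R * (2 * n%:R * (tilt delta ^- D * (1 - delta + delta * tilt delta) ^+ (w + D)))
    <= 2 * expR 1 * m%:R `^ (- (1 / 5)).
Proof.
move=> le_nm le_w.
have m_pos : (0 : R) < m%:R by rewrite ltr0n.
have tilt_ge0 : 0 <= tilt delta := expR_ge0 _.
have moment_ge0 : 0 <= (1 - delta + delta * tilt delta) ^+ (w + D).
  rewrite exprn_ge0 //; have := delta_le_tenth.
  by have := mulr_ge0 (ltW delta_gt0) tilt_ge0; lra.
apply: (@le_trans _ _ ((m ^ 2)%:R * (2 * m%:R * (expR (- (4 * lm)) * expR (4 / 5 * lm + 1))))).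
  rewrite ler_wpM2l //; apply: ler_pM.
  - by rewrite mulr_ge0.
  - by rewrite mulr_ge0 // invr_ge0 exprn_ge0.
  - by rewrite ler_wpM2l ?ler_nat.
  - apply: ler_pM => //; first by rewrite invr_ge0 exprn_ge0.
      exact: tilt_pow_excess.
    exact: tilted_moment_le.
have m_eq : m%:R = expR lm by rewrite lnK ?posrE.
rewrite /powR gt_eqF // -/lm natrX m_eq -expRM_natr mulrCA -!mulrA ler_wpM2l //.
by rewrite -!expRD ler_expR; lra.
Qed.
End Numerics.

Theorem lemma10 (R : realType) :
  exists C : R, exists M0 : nat, 0 < C /\
  forall (delta : R) (m n : nat) (p : 'I_n -> R),
    0 < delta -> delta <= 10 ^- 7 ->
    (M0 <= m)%N -> (n < m)%N ->
    (3 * blocklen R m <= n)%N ->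
    (forall j, 0 <= p j <= 1) ->
    1 - C * (m%:R `^ (- (1 / 5))) <= prob_good delta m p.
Proof.
exists (2 * expR 1), 1%N; split=> [|delta m n p delta_gt0 delta_small m_gt0 lt_nm _ p01].
  by rewrite mulr_gt0 ?expR_gt0.
set w := blocklen R m; set d := dbound delta m; set k := (n - 3 * w + 1)%N.
have delta_le1 : delta <= 1 by have := delta_le_tenth delta_small; lra.
have k_gt0 : (0 < k)%N by rewrite /k addn1.
have le_w : w%:R <= 10000 * ln (m%:R : R).
  by rewrite /w /blocklen truncn_le mulr_ge0 ?ler0n ?ln_ge0 ?ler1n.
apply: le_trans (union_bound_iid (weight_ge0 (ltW delta_gt0) delta_le1 p01)
  (sum_weight delta p k_gt0) (m ^ 2) (fun o => trace_ok w d (kept_of o) (start_of o))).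
rewrite lerD2l lerN2.
apply: le_trans (failure_bound_le delta_gt0 delta_small m_gt0 (ltnW lt_nm) le_w).
rewrite ler_wpM2l ?ler0n //.
exact: prob_trace_not_ok (ltW delta_gt0) delta_le1 (dbound_ge0 delta_gt0 delta_small m_gt0)
  (tilt_ge1 delta_gt0 delta_small) k_gt0.
Qed.
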